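(* (Weakening in MRL.) For every sequent $\Gamma$, every set of roles $R\subseteq\mathcal{R}$ and every formula $A$ of MRL: if $\Gamma$ is derivable in MRL, then $\Gamma, R{:}A$ is derivable in MRL.
   Context: Fix a nonempty set $\mathcal{R}$ (the set of roles). For $R\subseteq\mathcal{R}$ write $\overline{R}=\mathcal{R}\setminus R$. An ultrafilter $\mathcal{U}$ on $\mathcal{R}$ is a set of subsets of $\mathcal{R}$ such that $\mathcal{R}\in\mathcal{U}$; $R_1\in\mathcal{U}$ and $R_1\subseteq R_2$ imply $R_2\in\mathcal{U}$; $R_1,R_2\in\mathcal{U}$ imply $R_1\cap R_2\in\mathcal{U}$; and for every $R\subseteq\mathcal{R}$, $R\in\mathcal{U}$ or $\overline{R}\in\mathcal{U}$. An endomorphism is any function $f:\mathcal{R}\to\mathcal{R}$, and $f^{-1}(R)$ denotes the preimage of $R$. Fix a first-order language of terms $t$ with variables $x$, and a collection of primitive (atomic) formulas $a$ (which may contain terms). Formulas of MRL: $A ::= a \mid \neg_f(A) \mid A_1\wedge_{\mathcal{U}} A_2 \mid A\supset_{f,\mathcal{U}} B \mid \forall_{\mathcal{U}}(\lambda x.A)$, with $f$ an endomorphism and $\mathcal{U}$ an ultrafilter on $\mathcal{R}$; $x$ is bound in $\forall_{\mathcal{U}}(\lambda x.A)$, and $A[t/x]$ is capture-avoiding substitution. An i-formula is a pair $R{:}A$ with $R\subseteq\mathcal{R}$ and $A$ a formula; a sequent is a finite multiset of i-formulas, and comma denotes multiset union. Derivability in MRL is given by the rules (premises $\Rightarrow$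 conclusion, $\Gamma,\Gamma_1,\Gamma_2$ arbitrary sequents): (Id) $\Gamma, R_1{:}a,\ldots,R_n{:}a$ is derivable whenever $n\ge1$ and $R_1,\ldots,R_n$ are pairwise disjoint with union $\mathcal{R}$; (Weaken) $\Gamma,R{:}A,R{:}A \Rightarrow \Gamma,R{:}A$; ($\neg$) $\Gamma, f^{-1}(R){:}A \Rightarrow \Gamma, R{:}\neg_f(A)$; ($\wedge$-neg-l) if $R\notin\mathcal{U}$: $\Gamma,R{:}A\Rightarrow\Gamma,R{:}A\wedge_{\mathcal{U}}B$; ($\wedge$-neg-r) if $R\notin\mathcal{U}$: $\Gamma,R{:}B\Rightarrow\Gamma,R{:}A\wedge_{\mathcal{U}}B$; ($\wedge$-pos) if $R\in\mathcal{U}$: $(\Gamma,R{:}A;\ \Gamma,R{:}B)\Rightarrow\Gamma,R{:}A\wedge_{\mathcal{U}}B$; ($\supset$-neg) if $R\notin\mathcal{U}$: $\Gamma,f^{-1}(R){:}A,R{:}B\Rightarrow\Gamma,R{:}A\supset_{f,\mathcal{U}}B$; ($\supset$-pos) if $R\in\mathcal{U}$: $(\Gamma_1,f^{-1}(R){:}A;\ \Gamma_2,R{:}B)\Rightarrow\Gamma_1,\Gamma_2,R{:}A\supset_{f,\mathcal{U}}B$; ($\forall$-neg) if $R\notin\mathcal{U}$ and $t$ is a term: $\Gamma,R{:}A[t/x]\Rightarrow\Gamma,R{:}\forall_{\mathcal{U}}(\lambda x.A)$; ($\forall$-pos) if $R\in\mathcal{U}$ and $x$ has no free occurrence in $\Gamma$: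 $\Gamma,R{:}A\Rightarrow\Gamma,R{:}\forall_{\mathcal{U}}(\lambda x.A)$. A sequent is derivable in MRL if it is the conclusion of a finite derivation tree built from these rules. *)

From Stdlib Require Import List Permutation.
Import ListNotations.

Set Implicit Arguments.

Section MRL.

(* Rl : the set of roles; F : function symbols; P : predicate symbols. *)
Context {Rl F P : Type}.

Definition rset := Rl -> Prop.
Definition rsubset (R1 R2 : rset) : Prop := forall x, R1 x -> R2 x.
Definition rcompl (R : rset) : rset := fun x => ~ R x.
Definition rcap (R1 R2 : rset) : rset := fun x => R1 x /\ R2 x.
Definition rfull : rset := fun _ => True.
Definition preim (f : Rl -> Rl) (R : rset) : rset := fun x => R (f x).

Record ultrafilter := {
  uf_mem :> rset -> Prop;
  uf_full : uf_mem rfull;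
  uf_up : forall R1 R2, uf_mem R1 -> rsubset R1 R2 -> uf_mem R2;
  uf_cap : forall R1 R2, uf_mem R1 -> uf_mem R2 -> uf_mem (rcap R1 R2);
  uf_compl : forall R, uf_mem R \/ uf_mem (rcompl R)
}.

(* First-order terms; variables are de Bruijn indices. *)
Inductive term : Type :=
| TVar : nat -> term
| TFun : F -> list term -> term.

Inductive atom : Type :=
| APred : P -> list term -> atom.

(* MRL formulas; All binds de Bruijn index 0 (the "lambda x"). *)
Inductive form : Type :=
| Atm : atom -> form
| Neg : (Rl -> Rl) -> form -> form
| Conj : ultrafilter -> form -> form -> form
| Imp : (Rl -> Rl) -> ultrafilter -> form -> form -> form
| All : ultrafilter -> form -> form.

Fixpoint tsubst (s : nat -> term) (t : term) : term :=
  match t with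
  | TVar n => s n
  | TFun f l => TFun f (map (tsubst s) l)
  end.

Definition asubst (s : nat -> term) (a : atom) : atom :=
  match a with APred p l => APred p (map (tsubst s) l) end.

Definition shift_sub : nat -> term := fun n => TVar (S n).

Definition up (s : nat -> term) : nat -> term :=
  fun n => match n with 0 => TVar 0 | S k => tsubst shift_sub (s k) end.

Fixpoint fsubst (s : nat -> term) (A : form) : form :=
  match A with
  | Atm a => Atm (asubst s a)
  | Neg f A => Neg f (fsubst s A)
  | Conj U A B => Conj U (fsubst s A) (fsubst s B)
  | Imp f U A B => Imp f U (fsubst s A) (fsubst s B)
  | All U A => All U (fsubst (up s) A)
  end.

Definition inst (t : term) (A : form) : form :=
  fsubst (fun n => match n with 0 => t | S k => TVar k end) A.

(* Shifting all free variables up: makes index 0 fresh. *)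
Definition shiftf (A : form) : form := fsubst shift_sub A.

(* i-formulas and sequents (multisets represented as lists up to permutation). *)
Definition iform := (rset * form)%type.
Definition sequent := list iform.

Definition shift_seq (G : sequent) : sequent :=
  map (fun p => (fst p, shiftf (snd p))) G.

Definition pairwise_disjoint (Rs : list rset) : Prop :=
  forall i j, i < length Rs -> j < length Rs -> i <> j ->
    forall x, ~ (nth i Rs rfull x /\ nth j Rs rfull x).

Definition covers (Rs : list rset) : Prop :=
  forall x, exists R, In R Rs /\ R x.

Inductive derivable : sequent -> Prop :=
| d_perm : forall G D, Permutation G D -> derivable G -> derivable D
| d_id : forall G (a : atom) (Rs : list rset),
    Rs <> [] -> pairwise_disjoint Rs -> covers Rs ->
    derivable (G ++ map (fun R => (R, Atm a)) Rs)
| d_weaken : forall G R A,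
    derivable (G ++ [(R, A); (R, A)]) -> derivable (G ++ [(R, A)])
| d_neg : forall G R f A,
    derivable (G ++ [(preim f R, A)]) -> derivable (G ++ [(R, Neg f A)])
| d_and_neg_l : forall G R (U : ultrafilter) A B,
    ~ U R -> derivable (G ++ [(R, A)]) -> derivable (G ++ [(R, Conj U A B)])
| d_and_neg_r : forall G R (U : ultrafilter) A B,
    ~ U R -> derivable (G ++ [(R, B)]) -> derivable (G ++ [(R, Conj U A B)])
| d_and_pos : forall G R (U : ultrafilter) A B,
    U R -> derivable (G ++ [(R, A)]) -> derivable (G ++ [(R, B)]) ->
    derivable (G ++ [(R, Conj U A B)])
| d_imp_neg : forall G R f (U : ultrafilter) A B,
    ~ U R -> derivable (G ++ [(preim f R, A); (R, B)]) ->
    derivable (G ++ [(R, Imp f U A B)])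
| d_imp_pos : forall G1 G2 R f (U : ultrafilter) A B,
    U R -> derivable (G1 ++ [(preim f R, A)]) -> derivable (G2 ++ [(R, B)]) ->
    derivable (G1 ++ G2 ++ [(R, Imp f U A B)])
| d_all_neg : forall G R (U : ultrafilter) A t,
    ~ U R -> derivable (G ++ [(R, inst t A)]) ->
    derivable (G ++ [(R, All U A)])
| d_all_pos : forall G R (U : ultrafilter) A,
    (* eigenvariable: index 0 is fresh for the shifted context *)
    U R -> derivable (shift_seq G ++ [(R, A)]) ->
    derivable (G ++ [(R, All U A)]).

End MRL.

(* Induction on derivations, weakening by a whole sequent D at once: every rule
   leaves its side context arbitrary, so D can be carried along in it up to
   permutation.  In the eigenvariable rule the context is shifted, so D is
   shifted with it, which keeps the eigenvariable fresh; this is why the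
   induction hypothesis must range over all D. *)
From Stdlib Require Import List Permutation.
Import ListNotations.

Section Weakening.

Context {Rl F P : Type}.

Lemma shift_seq_app (G D : @sequent Rl F P) :
  shift_seq (G ++ D) = shift_seq G ++ shift_seq D.
Proof. apply map_app. Qed.

Lemma derivable_swap_tail (G D L : @sequent Rl F P) :
  derivable ((G ++ L) ++ D) -> derivable ((G ++ D) ++ L).
Proof.
  apply d_perm.
  rewrite <- !app_assoc.
  apply Permutation_app_head, Permutation_app_comm.
Qed.

Lemma derivable_app_r (G : @sequent Rl F P) :
  derivable G -> forall D, derivable (G ++ D).
Proof.
  induction 1 as [G G' HGG' _ IH | G a Rs Hne Hdisj Hcov
    | G R A _ IH | G R f A _ IH
    | G R U A B HU _ IH | G R U A B HU _ IH
    | G R U A B HU _ IHA _ IHB | G R f U A B HU _ IH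
    | G1 G2 R f U A B HU _ IHA HB _
    | G R U A t HU _ IH | G R U A HU _ IH]; intro D.
  - apply d_perm with (G ++ D); [apply Permutation_app_tail|]; auto.
  - apply derivable_swap_tail, d_id; assumption.
  - apply derivable_swap_tail, d_weaken, derivable_swap_tail, IH.
  - apply derivable_swap_tail, d_neg, derivable_swap_tail, IH.
  - apply derivable_swap_tail, d_and_neg_l; [assumption|].
    apply derivable_swap_tail, IH.
  - apply derivable_swap_tail, d_and_neg_r; [assumption|].
    apply derivable_swap_tail, IH.
  - apply derivable_swap_tail, d_and_pos; [assumption| |].
    + apply derivable_swap_tail, IHA.
    + apply derivable_swap_tail, IHB.
  - apply derivable_swap_tail, d_imp_neg; [assumption|].
    apply derivable_swap_tail, IH.
  - apply d_perm with ((G1 ++ D) ++ G2 ++ [(R, Imp f U A B)]).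
    + rewrite <- !app_assoc.
      apply Permutation_app_head.
      rewrite (app_assoc G2).
      apply Permutation_app_comm.
    + apply d_imp_pos; [assumption| |assumption].
      apply derivable_swap_tail, IHA.
  - apply derivable_swap_tail, d_all_neg with t; [assumption|].
    apply derivable_swap_tail, IH.
  - apply derivable_swap_tail, d_all_pos; [assumption|].
    rewrite shift_seq_app.
    apply derivable_swap_tail, IH.
Qed.

End Weakening.

Theorem mainTheorem1 (Rl F P : Type) (Rl_nonempty : inhabited Rl)
  (G : @sequent Rl F P) (R : @rset Rl) (A : @form Rl F P) :
  derivable G -> derivable (G ++ [(R, A)]).
Proof.
  intro HG.
  exact (derivable_app_r G HG [(R, A)]).
Qed.
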